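(* Let $n\ge 1$. Every optimal $n$-town $S$ is convex, i.e., every point of $\mathbb{Z}\times\mathbb{Z}$ lying in the convex hull of $S$ belongs to $S$.
   Context: An $n$-town is a set $S\subset\mathbb{Z}\times\mathbb{Z}$ of exactly $n$ distinct grid points. Its cost is $c(S)=\frac12\sum_{s\in S}\sum_{t\in S}\|s-t\|_1$ (sum of Manhattan distances over all unordered pairs). An $n$-town is optimal if its cost is minimum among all $n$-towns. *)

From HB Require Import structures.
From mathcomp Require Import all_boot all_order all_algebra.
From mathcomp Require Import finmap.
From mathcomp Require Import reals.
Set Implicit Arguments. Unset Strict Implicit. Unset Printing Implicit Defensive.
Import Order.TTheory GRing.Theory Num.Theory.
Local Open Scope fset_scope.

Definition point := (int * int)%type.

Definition l1dist (s t : point) : nat :=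
  (`|s.1 - t.1|%N + `|s.2 - t.2|%N)%N.

Definition is_town (n : nat) (S : {fset point}) : Prop := #|` S| = n.

(* cost = 1/2 * sum over ordered pairs (s,t) of ||s - t||_1
   (the double sum is even, so %/ 2 is exact) *)
Definition cost (S : {fset point}) : nat :=
  ((\sum_(s <- S) \sum_(t <- S) l1dist s t) %/ 2)%N.

Definition optimal_town (n : nat) (S : {fset point}) : Prop :=
  is_town n S /\ forall T : {fset point}, is_town n T -> (cost S <= cost T)%N.

Definition in_conv_hull (R : realType) (S : {fset point}) (p : point) : Prop :=
  exists w : point -> R,
    [/\ (forall s, s \in S -> 0 <= w s)%R,
        (\sum_(s <- S) w s = 1)%R,
        (\sum_(s <- S) w s * (s.1)%:~R = (p.1)%:~R)%R
      & (\sum_(s <- S) w s * (s.2)%:~R = (p.2)%:~R)%R].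

Definition town_convex (R : realType) (S : {fset point}) : Prop :=
  forall p : point, in_conv_hull R S p -> p \in S.

From HB Require Import structures.
From mathcomp Require Import all_boot all_order all_algebra.
From mathcomp Require Import finmap.
From mathcomp Require Import reals.
From mathcomp Require Import zify.
Set Implicit Arguments. Unset Strict Implicit. Unset Printing Implicit Defensive.
Import Order.TTheory GRing.Theory Num.Theory.
Local Open Scope fset_scope.

(** Write [D_S(q)] for the total L1 distance from [q] to the points of [S].
    Each coordinate distance [|x - c|] is convex, so [D_S] at a convex
    combination of points of [S] is at most the same combination of the values
    [D_S(s)], hence at most [D_S(s0)] for some [s0] in [S].  If such a hull
    point [p] were missing from [S], replacing [s0] by [p] would change the
    double sum (twice the cost) by [2 (D_S(p) - |p - s0|_1 - D_S(s0)) < 0],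
    contradicting optimality. *)

Lemma l1distC s t : l1dist s t = l1dist t s.
Proof. by rewrite /l1dist distnC [X in (_ + X)%N]distnC. Qed.

Lemma l1distxx s : l1dist s s = 0%N.
Proof. by rewrite /l1dist !subrr. Qed.

Lemma l1dist_gt0 s t : s != t -> (0 < l1dist s t)%N.
Proof.
case: s t => [a b] [c d] neq; rewrite /l1dist /= addn_gt0 !absz_gt0 !subr_eq0.
by apply: contraNT neq; rewrite negb_or !negbK => /andP[/eqP-> /eqP->].
Qed.

Definition dist_sum (A : {fset point}) (q : point) : nat :=
  (\sum_(t <- A) l1dist q t)%N.

Definition pair_sum (A : {fset point}) : nat :=
  (\sum_(s <- A) \sum_(t <- A) l1dist s t)%N.

Lemma dist_sumU1 (A : {fset point}) (x q : point) : x \notin A ->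
  dist_sum (x |` A) q = (l1dist q x + dist_sum A q)%N.
Proof. by move=> xA; rewrite /dist_sum big_fsetU1. Qed.

Lemma pair_sumU1 (A : {fset point}) (x : point) : x \notin A ->
  pair_sum (x |` A) = (pair_sum A + 2 * dist_sum A x)%N.
Proof.
move=> xA; rewrite /pair_sum big_fsetU1 //= -/(dist_sum _ x) dist_sumU1 //.
rewrite (eq_bigr (fun s => l1dist x s + \sum_(t <- A) l1dist s t)%N); last first.
  by move=> s _; rewrite big_fsetU1 // l1distC.
by rewrite big_split /= -/(dist_sum A x) l1distxx add0n addnA addnn -mul2n addnC.
Qed.

Lemma cost_swap_lt (S : {fset point}) (s0 p : point) :
  s0 \in S -> p \notin S -> (dist_sum S p <= dist_sum S s0)%N ->
  (cost (p |` (S `\ s0)) < cost S)%N.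
Proof.
move=> s0S pS le_ps0.
have p_neq_s0 : p != s0 by apply: contraNneq pS => ->.
have s0S' : s0 \notin S `\ s0 by rewrite fsetD11.
have pS' : p \notin S `\ s0 by rewrite in_fsetD1 (negbTE pS) andbF.
move: le_ps0 (l1dist_gt0 p_neq_s0); rewrite /cost -/(pair_sum _) -/(pair_sum S).
rewrite -[in pair_sum S](fsetD1K s0S) -[in dist_sum S](fsetD1K s0S).
rewrite !dist_sumU1 // !pair_sumU1 // l1distxx.
lia.
Qed.

Local Open Scope ring_scope.

Lemma ler_norm_convex (R : numDomainType) (I : eqType) (r : seq I)
    (w x : I -> R) c :
  (forall i, i \in r -> 0 <= w i) -> \sum_(i <- r) w i = 1 ->
  `|\sum_(i <- r) w i * x i - c| <= \sum_(i <- r) w i * `|x i - c|.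
Proof.
move=> w_ge0 w_sum1.
have -> : \sum_(i <- r) w i * x i - c = \sum_(i <- r) w i * (x i - c).
  by rewrite (eq_bigr _ (fun i _ => mulrBr _ _ _)) sumrB -mulr_suml w_sum1 mul1r.
apply: le_trans (ler_norm_sum _ _ _) _.
rewrite big_seq [leRHS]big_seq; apply: ler_sum => i ir.
by rewrite normrM ger0_norm ?w_ge0.
Qed.

Lemma convex_comb_has_ge (R : realDomainType) (I : eqType) (r : seq I)
    (w f : I -> R) a :
  (forall i, i \in r -> 0 <= w i) -> \sum_(i <- r) w i = 1 ->
  a <= \sum_(i <- r) w i * f i -> has (fun i => a <= f i) r.
Proof.
move=> w_ge0 w_sum1; apply: contraTT => /hasPn f_lt; rewrite -ltNge.
have [i ir w_gt0] : exists2 i, i \in r & 0 < w i.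
  have : \sum_(i <- r) w i != 0 by rewrite w_sum1 oner_neq0.
  by rewrite big_seq psumr_neq0 // => /hasP[i _ /andP[ir ?]]; exists i.
rewrite -subr_gt0 -[a in a - _]mul1r -w_sum1 mulr_suml -sumrB big_seq.
have a_sub_f_gt0 j : j \in r -> 0 < a - f j by move=> jr; rewrite subr_gt0 ltNge f_lt.
under eq_bigr do rewrite -mulrBr.
have term_ge0 j : j \in r -> 0 <= w j * (a - f j).
  by move=> jr; rewrite mulr_ge0 ?w_ge0 ?ltW ?a_sub_f_gt0.
rewrite lt0r sumr_ge0 // andbT psumr_neq0 //.
by apply/hasP; exists i => //; rewrite ir mulr_gt0 ?a_sub_f_gt0.
Qed.

Lemma natr_l1dist (R : numDomainType) (s t : point) :
  (l1dist s t)%:R = `|s.1%:~R - t.1%:~R| + `|s.2%:~R - t.2%:~R| :> R.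
Proof. by rewrite /l1dist natrD !natr_absz !intr_norm !intrB. Qed.

Lemma dist_sum_le_convex_comb (R : numDomainType) (S : {fset point})
    (w : point -> R) (p : point) :
  (forall s, s \in S -> 0 <= w s) -> \sum_(s <- S) w s = 1 ->
  \sum_(s <- S) w s * s.1%:~R = p.1%:~R ->
  \sum_(s <- S) w s * s.2%:~R = p.2%:~R ->
  (dist_sum S p)%:R <= \sum_(s <- S) w s * (dist_sum S s)%:R.
Proof.
move=> w_ge0 w_sum1 p1 p2; rewrite /dist_sum natr_sum.
under [leRHS]eq_bigr do rewrite natr_sum mulr_sumr.
rewrite exchange_big /=; apply: ler_sum => t _.
under [leRHS]eq_bigr do rewrite natr_l1dist mulrDr.
rewrite natr_l1dist big_split /= -p1 -p2.
by apply: lerD; apply: ler_norm_convex.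
Qed.

Lemma in_conv_hull_dist_sum (R : realType) (S : {fset point}) (p : point) :
  in_conv_hull R S p -> has (fun s => dist_sum S p <= dist_sum S s)%N S.
Proof.
move=> [w [w_ge0 w_sum1 p1 p2]].
have := convex_comb_has_ge w_ge0 w_sum1 (dist_sum_le_convex_comb w_ge0 w_sum1 p1 p2).
by apply: sub_has => s; rewrite ler_nat.
Qed.

Lemma cardfs_swap (K : choiceType) (S : {fset K}) (s0 p : K) :
  s0 \in S -> p \notin S -> #|` p |` (S `\ s0)| = #|` S|.
Proof.
move=> s0S pS.
by rewrite cardfsU1 in_fsetD1 (negbTE pS) andbF (cardfsD1 s0 S) s0S.
Qed.

Theorem lemma2 (R : realType) (n : nat) (S : {fset point}) :
  (1 <= n)%N -> optimal_town n S -> town_convex R S.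
Proof.
move=> _ [S_card S_opt] p p_hull; apply: contraT => pS.
have /hasP[s0 s0S le_ps0] := in_conv_hull_dist_sum p_hull.
have swap_town : is_town n (p |` (S `\ s0)) by rewrite /is_town cardfs_swap.
by move: (S_opt _ swap_town); rewrite leqNgt cost_swap_lt.
Qed.
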